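(* Let $2\le n<m$. Suppose $\lambda$ is a characteristic matrix (resp. real characteristic matrix) on $C^{n+1}(m+1)^*$ of the block form $$\lambda=\begin{pmatrix}1 & a_2\ \cdots\ a_{m+1}\\ \mathbf{0} & A\end{pmatrix},$$ where $\mathbf{0}$ is the zero column of length $n$ and $A$ is an $n\times m$ matrix. Then $A$ is a characteristic matrix (resp. real characteristic matrix) on $C^n(m)^*$.
   Context: For $2\le n<m$, $C^n(m)^*$ is the dual of the cyclic polytope $C^n(m)$, a simple $n$-polytope with facets $F_1,\ldots,F_m$ labeled so that $F_{i_1},\ldots,F_{i_n}$ meet at a vertex iff $\{i_1,\ldots,i_n\}$ is a disjoint union of sets of the form $I_j=\{j,j+1\}\cap\{1,\ldots,m\}$, $j\in\{0,\ldots,m\}$ (dual Gale evenness condition); the same labeling convention is used for $C^{n+1}(m+1)^*$. A characteristic matrix on a simple $n$-polytope with facets $F_1,\ldots,F_m$ is an integer $n\times m$ matrix whose columns $\boldsymbol\lambda_{i_1},\ldots,\boldsymbol\lambda_{i_n}$ have determinant $\pm1$ whenever $F_{i_1},\ldots,F_{i_n}$ meet at a vertex; a real characteristic matrix is the analogue over $\mathbb{Z}/2$ with determinant $1$. *)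

From mathcomp Require Import all_boot all_order all_algebra.
Set Implicit Arguments. Unset Strict Implicit. Unset Printing Implicit Defensive.
Import GRing.Theory Num.Theory.
Local Open Scope ring_scope.

(* Facets of C^n(m)^* are indexed 0-based by 'I_m: facet F_{i+1} <-> i : 'I_m.
   For j in {0,...,m}, I_j = {j, j+1} ∩ {1,...,m}; in 0-based indices this is
   the set of i : 'I_m with i+1 = j or i+1 = j+1. *)
Definition gale_block (m : nat) (j : 'I_m.+1) : {set 'I_m} :=
  [set i : 'I_m | (i.+1 == j)%N || (i.+1 == j.+1)%N].

Definition gale_union (m : nat) (S : {set 'I_m}) : Prop :=
  exists P : {set {set 'I_m}},
    [/\ forall B, B \in P -> exists j : 'I_m.+1, B = gale_block j,
        trivIset P & cover P = S].

(* The facets indexed by f 0, ..., f (n-1) meet at a vertex of C^n(m)^*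
   (dual Gale evenness condition: the n indices form an n-element set that
   is a disjoint union of sets I_j). *)
Definition dual_cyclic_vertex (n m : nat) (f : 'I_n -> 'I_m) : Prop :=
  #|[set f k | k in 'I_n]| = n /\ gale_union [set f k | k in 'I_n].

Definition char_matrix_dual_cyclic (n m : nat) (M : 'M[int]_(n, m)) : Prop :=
  forall f : 'I_n -> 'I_m, dual_cyclic_vertex f ->
    \det (colsub f M) = 1 \/ \det (colsub f M) = -1.

Definition real_char_matrix_dual_cyclic (n m : nat) (M : 'M['F_2]_(n, m)) : Prop :=
  forall f : 'I_n -> 'I_m, dual_cyclic_vertex f -> \det (colsub f M) = 1.

Definition lower_right_block (R : Type) (n m : nat) (L : 'M[R]_(n.+1, m.+1))
  : 'M[R]_(n, m) := \matrix_(i, j) L (lift ord0 i) (lift ord0 j).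

From mathcomp Require Import all_boot all_order all_algebra.
Import GRing.Theory Num.Theory.
Set Implicit Arguments. Unset Strict Implicit.
Local Open Scope ring_scope.

(* If the columns J of A index a vertex of C^n(m)^*, then the columns
   {1} ∪ (J + 1) of L index a vertex of C^{n+1}(m+1)^*, and expanding that
   minor of L along its first column (1 on top, zeros below) gives the minor of
   A on J.  For the vertex condition, shifting a block I_j by one gives
   I_{j+1}, except that I_0 = {1} becomes {2}; the new index 1 then either
   forms the block I_0 = {1} or merges with {2} into I_1 = {1, 2}. *)

Section AddBlock.
Variable T : finType.
Implicit Types (A B : {set T}) (P : {set {set T}}).

Lemma cover_setU1 A P : cover (A |: P) = A :|: cover P.
Proof. by rewrite /cover bigcup_setU big_set1. Qed.

Lemma trivIset_setU1 A P :
  [disjoint A & cover P] -> trivIset P -> trivIset (A |: P).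
Proof. by move=> dAP tP; apply: trivIsetU; rewrite ?trivIset1 ?cover1. Qed.

Lemma cover_merge_block A B P : trivIset P -> B \in P ->
  cover ((A :|: B) |: (P :\ B)) = A :|: cover P.
Proof.
move=> tP PB; have sBP : B \subset cover P by exact: bigcup_max PB _.
by rewrite cover_setU1 coverD1 // -setUA -{1}(setIidPr sBP) setID.
Qed.

Lemma trivIset_merge_block A B P : [disjoint A & cover P] -> trivIset P ->
  B \in P -> trivIset ((A :|: B) |: (P :\ B)).
Proof.
move=> dAP tP PB; apply: trivIset_setU1; last exact: trivIsetD.
rewrite coverD1 // disjoint_sym disjoints_subset setCU subsetI subsetDr andbT.
by apply: subset_trans (subsetDl _ _) _; rewrite -disjoints_subset disjoint_sym.
Qed.

End AddBlock.

Lemma ord0_notin_lift0 m (A : {set 'I_m}) : ord0 \notin lift ord0 @: A.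
Proof. by apply/imsetP=> -[i _ /eqP]; rewrite (negbTE (neq_lift _ _)). Qed.

Section ShiftGaleUnion.
Variable m : nat.

Lemma gale_block0 : gale_block (ord0 : 'I_m.+2) = [set ord0].
Proof. by apply/setP=> -[[|i] ?]; rewrite !inE. Qed.

Lemma lift0_gale_block (j : 'I_m.+1) :
  j != ord0 -> lift ord0 @: gale_block j = gale_block (lift ord0 j).
Proof.
move=> nj0; apply/setP=> x; case: (unliftP ord0 x) => [i ->|->].
  by rewrite mem_imset; [rewrite !inE | exact: lift_inj].
rewrite (negbTE (ord0_notin_lift0 _)) inE /=.
by case: j nj0 => -[|j].
Qed.

Lemma setU1_lift0_gale_block0 :
  ord0 |: lift ord0 @: gale_block (ord0 : 'I_m.+1)
  = gale_block (lift ord0 (ord0 : 'I_m.+1)).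
Proof.
apply/setP=> x; case: (unliftP ord0 x) => [i ->|->]; last by rewrite !inE.
rewrite in_setU1 eq_sym (negbTE (neq_lift _ _)) mem_imset; last exact: lift_inj.
by rewrite !inE.
Qed.

Lemma gale_union_shift (S : {set 'I_m}) :
  gale_union S -> gale_union (ord0 |: lift ord0 @: S).
Proof.
case=> P [blocksP tP coverP].
pose Q := [set lift ord0 @: (B : {set _}) | B in P].
have tQ : trivIset Q by rewrite imset_trivIset //; exact: lift_inj.
have coverQ : cover Q = lift ord0 @: S by rewrite cover_imset -coverP imset_cover.
have ord0Q : [disjoint [set ord0] & cover Q].
  by rewrite disjoints1 coverQ ord0_notin_lift0.
pose B0 := lift ord0 @: gale_block (ord0 : 'I_m.+1).
have blocksQ C : C \in Q -> C != B0 -> exists j, C = gale_block j.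
  move=> /imsetP[B PB ->] nB0; have [j Bj] := blocksP B PB; subst B.
  exists (lift ord0 j); apply: lift0_gale_block.
  by apply: contraNneq nB0 => ->.
have [QB0 | nQB0] := boolP (B0 \in Q).
- exists (([set ord0] :|: B0) |: (Q :\ B0)); split.
  + move=> C /setU1P[->|/setD1P[nCB0 QC]]; last exact: blocksQ.
    by exists (lift ord0 ord0); rewrite /B0 setU1_lift0_gale_block0.
  + exact: trivIset_merge_block.
  + by rewrite cover_merge_block // coverQ.
- exists ([set ord0] |: Q); split.
  + move=> C /setU1P[->|QC]; first by exists ord0; rewrite gale_block0.
    by apply: blocksQ => //; apply: contraNneq nQB0 => <-.
  + exact: trivIset_setU1.
  + by rewrite cover_setU1 coverQ.
Qed.

End ShiftGaleUnion.

Section ExtendSelection.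
Variables n m : nat.
Variable f : 'I_n -> 'I_m.

Definition extend0 (k : 'I_n.+1) : 'I_m.+1 :=
  if unlift ord0 k is Some k' then lift ord0 (f k') else ord0.

Lemma extend0_ord0 : extend0 ord0 = ord0.
Proof. by rewrite /extend0 unlift_none. Qed.

Lemma extend0_lift k : extend0 (lift ord0 k) = lift ord0 (f k).
Proof. by rewrite /extend0 liftK. Qed.

Lemma imset_extend0 :
  [set extend0 k | k in 'I_n.+1] = ord0 |: lift ord0 @: [set f k | k in 'I_n].
Proof.
apply/setP=> x; rewrite in_setU1; apply/imsetP/idP.
- move=> [k _ ->]; case: (unliftP ord0 k) => [k' ->|->].
    by rewrite extend0_lift; apply/orP; right; rewrite !imset_f.
  by rewrite extend0_ord0 eqxx.
- case/orP=> [/eqP ->|/imsetP[_ /imsetP[k _ ->] ->]].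
    by exists ord0; rewrite ?extend0_ord0.
  by exists (lift ord0 k); rewrite ?extend0_lift.
Qed.

Lemma dual_cyclic_vertex_extend0 :
  dual_cyclic_vertex f -> dual_cyclic_vertex extend0.
Proof.
case=> card_f gale_f; rewrite /dual_cyclic_vertex imset_extend0; split.
  by rewrite cardsU1 ord0_notin_lift0 card_imset ?card_f //; exact: lift_inj.
exact: gale_union_shift.
Qed.

Lemma det_colsub_extend0 (R : comNzRingType) (L : 'M[R]_(n.+1, m.+1)) :
  L ord0 ord0 = 1 -> (forall i : 'I_n, L (lift ord0 i) ord0 = 0) ->
  \det (colsub extend0 L) = \det (colsub f (lower_right_block L)).
Proof.
move=> L00 L_col0; rewrite (expand_det_col _ ord0) big_ord_recl big1 ?addr0.
  rewrite !mxE extend0_ord0 L00 mul1r /cofactor addn0 expr0 mul1r.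
  by congr (\det _); apply/matrixP=> i j; rewrite !mxE extend0_lift.
by move=> i _; rewrite !mxE extend0_ord0 L_col0 mul0r.
Qed.

End ExtendSelection.

Theorem lemma6p1 :
  (forall (n m : nat) (L : 'M[int]_(n.+1, m.+1)),
      (2 <= n)%N -> (n < m)%N ->
      L ord0 ord0 = 1 ->
      (forall i : 'I_n, L (lift ord0 i) ord0 = 0) ->
      char_matrix_dual_cyclic L ->
      char_matrix_dual_cyclic (lower_right_block L))
  /\
  (forall (n m : nat) (L : 'M['F_2]_(n.+1, m.+1)),
      (2 <= n)%N -> (n < m)%N ->
      L ord0 ord0 = 1 ->
      (forall i : 'I_n, L (lift ord0 i) ord0 = 0) ->
      real_char_matrix_dual_cyclic L ->
      real_char_matrix_dual_cyclic (lower_right_block L)).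
Proof.
split=> n m L _ _ L00 L_col0 charL f vertex_f;
  rewrite -det_colsub_extend0 //; exact/charL/dual_cyclic_vertex_extend0.
Qed.
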